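(* Let $(\mathcal{S}_n)_{n\in\mathbb{N}}$ be a sequence of solid subsets of $\mathbb{L}^0_+$. Then $\bigcap_{n\in\mathbb{N}}\mathcal{S}_n=\{0\}$ holds if and only if $\bigcap_{n\in\mathbb{N}}\overline{\mathcal{S}_n}=\{0\}$, where $\overline{\mathcal{S}_n}$ is the closure of $\mathcal{S}_n$ in $\mathbb{L}^0$.
   Context: $(\Omega,\mathcal{F},\mathbb{P})$ is a probability space; $\mathbb{L}^0$ is the space of (equivalence classes modulo null sets of) real-valued random variables with the topology of convergence in probability; $\mathbb{L}^0_+$ its nonnegative elements. $\mathcal{S}\subseteq\mathbb{L}^0_+$ is solid if $Y\in\mathbb{L}^0_+$, $X\in\mathcal{S}$, $Y\le X$ imply $Y\in\mathcal{S}$. *)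

From HB Require Import structures.
From mathcomp Require Import all_boot all_order all_algebra.
From mathcomp Require Import all_classical all_reals all_analysis.
Set Implicit Arguments. Unset Strict Implicit. Unset Printing Implicit Defensive.
Import Order.TTheory GRing.Theory Num.Theory.
Local Open Scope classical_set_scope.
Local Open Scope ring_scope.

(* Elements of L^0 are represented by measurable functions T -> R;
   equivalence classes modulo P-null sets are handled by a.e. equality. *)
Section L0.
Context (d : measure_display) (T : measurableType d) (R : realType)
  (P : probability T R).

Definition inL0 (S : set (T -> R)) (X : T -> R) : Prop :=
  measurable_fun setT X /\ exists Y : T -> R, S Y /\ {ae P, forall x, X x = Y x}.

Definition solidL0 (S : set (T -> R)) : Prop :=
  (forall X, S X -> measurable_fun setT X /\ {ae P, forall x, 0 <= X x}) /\
  (forall X Y : T -> R, S X -> measurable_fun setT Y ->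
     {ae P, forall x, 0 <= Y x} -> {ae P, forall x, Y x <= X x} -> S Y).

(* closure of S in L^0 for the topology of convergence in probability,
   whose basic neighbourhoods of X are
   {Y : P(|X - Y| > eps) < delta}, eps, delta > 0. *)
Definition closureL0 (S : set (T -> R)) : set (T -> R) :=
  fun X => measurable_fun setT X /\
    forall eps delta : R, 0 < eps -> 0 < delta ->
      exists Y : T -> R, S Y /\ measurable_fun setT Y /\
        (P [set x | (eps < `|X x - Y x|)%R] < delta%:E)%E.

Definition bigcap_eq0 (S : nat -> set (T -> R)) : Prop :=
  forall X, measurable_fun setT X ->
    ((forall n, inL0 (S n) X) <-> {ae P, forall x, X x = 0}).

End L0.

From HB Require Import structures.
From mathcomp Require Import all_boot all_order all_algebra.
From mathcomp Require Import all_classical all_reals all_analysis.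
From mathcomp Require Import lra.
Set Implicit Arguments. Unset Strict Implicit. Unset Printing Implicit Defensive.
Import Order.TTheory GRing.Theory Num.Theory.
Local Open Scope classical_set_scope.
Local Open Scope ring_scope.

(* Each solid S_n lies in its closure, and 0 lies in the intersection of the
   S_n as soon as it lies in that of the closures, so the intersection of the
   closures is the larger one and the real content is that it is {0} when the
   intersection of the S_n is.  Let X lie in every closure with
   p = P(|X| > e) > 0, and pick Y_n in S_n with P(|X - Y_n| > e/2) < p 2^-(n+2).
   On the set A where |X| > e and |X - Y_n| <= e/2 for all n, which has
   probability at least p/2, every Y_n is at least e/2; by solidity
   (e/2) 1_A lies in every S_n, hence vanishes a.s., contradicting P(A) > 0. *)

Section measure_facts.
Context {d : measure_display} {T : measurableType d} {R : realType}
  (P : probability T R).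

Lemma measurable_normr_gt (f : T -> R) (e : R) : measurable_fun setT f ->
  measurable [set x | e < `|f x|].
Proof.
move=> mf.
have mnf : measurable_fun setT (fun x => `|f x|).
  exact: measurableT_comp (@measurable_realfun.normr_measurable R setT) mf.
rewrite (_ : [set x | e < `|f x|] = setT `&` (fun x => `|f x|) @^-1` `]e, +oo[).
  by apply: mnf => //; exact: measurable_itv.
by apply/seteqP; split => x /=; rewrite ?in_itv /= ?andbT => // -[].
Qed.

Lemma ae_eq0_level_sets_null (X : T -> R) : measurable_fun setT X ->
  (forall e, 0 < e -> P [set x | e < `|X x|] = 0%E) -> {ae P, forall x, X x = 0}.
Proof.
move=> mX null.
pose B k := [set x | (k.+1%:R)^-1 < `|X x|].
have mB k : measurable (B k) by exact: measurable_normr_gt.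
exists (\bigcup_k B k); split; first exact: bigcupT_measurable.
  apply/eqP; rewrite eq_le measure_ge0 andbT.
  apply: le_trans (measure_sigma_subadditive _ mB (bigcupT_measurable B mB)
    (@subset_refl _ _)) _.
  by rewrite eseries0 // => k _ _; apply: null; rewrite invr_gt0 ltr0n.
move=> x /= /eqP X0.
exists (Num.truncn `|X x|^-1) => //; rewrite /B /=.
by rewrite invf_plt ?posrE ?ltr0n ?normr_gt0 //; exact: truncnS_gt.
Qed.

Lemma measure_le_setD_series (B : set T) (C : (set T)^nat) :
  measurable B -> (forall n, measurable (C n)) ->
  (P B <= P (B `\` \bigcup_n C n) + \sum_(n <oo) P (C n))%E.
Proof.
move=> mB mC; have mUC := bigcupT_measurable C mC.
rewrite (measureDI P mB mUC) leeD2l //.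
apply: le_trans (measure_sigma_subadditive _ mC mUC (@subset_refl _ _)).
apply: le_measure; rewrite ?inE //; exact: measurableI.
Qed.

Lemma scale_indic_ae0_null (A : set T) (e : R) : measurable A -> 0 < e ->
  {ae P, forall x, e * \1_A x = 0} -> P A = 0%E.
Proof.
move=> mA e0 [N [mN PN0 sN]]; apply/eqP; rewrite eq_le measure_ge0 andbT -PN0.
apply: le_measure; rewrite ?inE // => x Ax; apply: sN => /=.
by rewrite indicE mem_set // mulr1; apply/eqP; rewrite gt_eqF.
Qed.

End measure_facts.

Lemma le_of_dist_le_norm_gt (R : realFieldType) (e w y : R) :
  2 * e < `|w| -> `|w - y| <= e -> 0 <= y -> e <= y.
Proof.
move=> ew wy y0.
have : `|w| <= `|w - y| + y.
  by rewrite -{2}(ger0_norm y0); apply: le_trans (ler_normD _ _); rewrite subrK.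
lra.
Qed.

Section closureL0_facts.
Context {d : measure_display} {T : measurableType d} {R : realType}
  {P : probability T R}.

Lemma inL0S (S S' : set (T -> R)) X : S `<=` S' -> inL0 P S X -> inL0 P S' X.
Proof. by move=> SS' [mX [Y [SY XY]]]; split=> //; exists Y; split; first exact: SS'. Qed.

Lemma closureL0_approx_series (S : nat -> set (T -> R)) (W : nat -> T -> R)
    (e delta : R) :
  (forall n, closureL0 P (S n) (W n)) -> 0 < e -> 0 < delta ->
  exists Y : nat -> T -> R, (forall n, S n (Y n) /\ measurable_fun setT (Y n)) /\
    (\sum_(n <oo) P [set x | (e < `|W n x - Y n x|)%R] <= delta%:E)%E.
Proof.
move=> clW e0 delta0.
have /choice [Y hY] : forall n, exists Yn, S n Yn /\ measurable_fun setT Yn /\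
    (P [set x | (e < `|W n x - Yn x|)%R] < (delta / (2 ^ n.+1)%:R)%:E)%E.
  by move=> n; apply: (clW n).2 => //; rewrite divr_gt0 // ltr0n expn_gt0.
exists Y; split=> [n|]; first by have [? []] := hY n.
apply: le_trans (epsilon_trick0 xpredT (ltW delta0)).
by apply: lee_nneseries => // n _; exact: ltW (hY n).2.2.
Qed.

Section solid.
Context {S : set (T -> R)} (solidS : solidL0 P S).

Lemma solid_sub_closureL0 : S `<=` closureL0 P S.
Proof.
move=> X SX; have [mX _] := solidS.1 X SX; split=> // e delta e0 delta0.
exists X; split=> //; split=> //.
rewrite (_ : [set x | _] = set0) ?measure0 ?lte_fin //.
by apply/seteqP; split=> x //=; rewrite subrr normr0 ltNge (ltW e0).
Qed.

Lemma solid_ae0 (X Y : T -> R) : S Y -> measurable_fun setT X ->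
  {ae P, forall x, X x = 0} -> S X.
Proof.
move=> SY mX X0; have [_ Y0] := solidS.1 Y SY.
apply: (solidS.2 Y) => //; first by apply: filterS X0 => x ->.
by apply: filterS2 X0 Y0 => x ->.
Qed.

Lemma solid_scale_indic (Y : T -> R) (A : set T) (e : R) :
  S Y -> measurable A -> 0 <= e -> {ae P, forall x, A x -> e <= Y x} ->
  S (fun x => e * \1_A x).
Proof.
move=> SY mA e0 AY; apply: (solidS.2 Y) => //.
- apply: measurable_realfun.measurable_funM; first exact: measurable_cst.
  exact: measurable_realfun.measurable_indic.
- by apply: aeW => x; rewrite indicE mulr_ge0.
- have [_ Y0] := solidS.1 Y SY.
  apply: filterS2 AY Y0 => x AYx Y0x; rewrite indicE.
  by case: (boolP (x \in A)) => [/set_mem/AYx|_]; rewrite ?mulr1 ?mulr0.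
Qed.

End solid.
End closureL0_facts.

Section bigcap.
Context (d : measure_display) (T : measurableType d) (R : realType)
  (P : probability T R) (S : nat -> set (T -> R)).
Hypothesis solidS : forall n, solidL0 P (S n).

Lemma bigcap_closureL0_level_null (X : T -> R) (W : nat -> T -> R) (e : R) :
  bigcap_eq0 P S -> measurable_fun setT X ->
  (forall n, closureL0 P (S n) (W n)) -> (forall n, {ae P, forall x, X x = W n x}) ->
  0 < e -> P [set x | e < `|X x|] = 0%E.
Proof.
move=> S0 mX clW XW e0; set B := [set x | _].
have mB : measurable B by exact: measurable_normr_gt.
apply/eqP; rewrite eq_le measure_ge0 andbT leNgt; apply/negP => PB0.
have PBE : P B = (fine (P B))%:E by rewrite fineK // fin_num_measure.
set p := fine (P B) in PBE; have p0 : 0 < p by rewrite -lte_fin -PBE.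
have e20 : 0 < e / 2 by rewrite divr_gt0.
have [Y [SY PY]] : exists Y : nat -> T -> R,
    (forall n, S n (Y n) /\ measurable_fun setT (Y n)) /\
    (\sum_(n <oo) P [set x | (e / 2 < `|W n x - Y n x|)%R] <= (p / 2)%:E)%E.
  by apply: closureL0_approx_series; rewrite ?divr_gt0.
pose C n := [set x | e / 2 < `|W n x - Y n x|].
have mC n : measurable (C n).
  apply: measurable_normr_gt; apply: measurable_realfun.measurable_funB.
    exact: (clW n).1.
  exact: (SY n).2.
pose A := B `\` \bigcup_n C n.
have mA : measurable A := measurableD mB (bigcupT_measurable C mC).
(* on A every Y n dominates e/2, so the small indicator below lies in all S n *)
have SZ n : S n (fun x => e / 2 * \1_A x).
  apply: (solid_scale_indic (solidS n) (SY n).1) => //; first exact: ltW.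
  have [_ Y0] := (solidS n).1 _ (SY n).1.
  apply: filterS2 (XW n) Y0 => x XWx Y0x [Bx notC].
  apply: (@le_of_dist_le_norm_gt _ _ (W n x) _ _ _ Y0x).
    by rewrite mulrC divfK ?pnatr_eq0 // -XWx.
  by rewrite leNgt; apply/negP => Cx; apply: notC; exists n.
have mZ : measurable_fun setT (fun x => e / 2 * \1_A x).
  by have [] := (solidS 0).1 _ (SZ 0).
have PA0 : P A = 0%E.
  apply: (scale_indic_ae0_null mA e20).
  apply/(S0 _ mZ) => n; split=> //; exists (fun x => e / 2 * \1_A x).
  by split=> //; exact: aeW.
have := measure_le_setD_series P mB mC; rewrite -/A PA0 add0e PBE.
move=> /le_trans /(_ PY); rewrite lee_fin leNgt => /negP; apply.
by rewrite ltr_pdivrMr // ltr_pMr // ltr1n.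
Qed.

Lemma bigcap_eq0_closureL0 : bigcap_eq0 P S -> bigcap_eq0 P (fun n => closureL0 P (S n)).
Proof.
move=> S0 X mX; split=> [XS|X0 n]; last first.
  by apply: inL0S (solid_sub_closureL0 (solidS n)) _; exact: (proj2 (S0 X mX) X0 n).
have /choice [W XW] : forall n, exists W, closureL0 P (S n) W /\ {ae P, forall x, X x = W x}.
  by move=> n; have [_ [W ?]] := XS n; exists W.
apply: ae_eq0_level_sets_null => // e e0.
exact: (bigcap_closureL0_level_null _ mX (fun n => (XW n).1) (fun n => (XW n).2)).
Qed.

Lemma closureL0_bigcap_eq0 : bigcap_eq0 P (fun n => closureL0 P (S n)) -> bigcap_eq0 P S.
Proof.
move=> clS0 X mX; split=> [XS|X0 n].
  by apply/(clS0 X mX) => n; apply: inL0S (solid_sub_closureL0 (solidS n)) _.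
(* the closure of S n contains 0, so S n is nonempty *)
have [_ [W [[_ clW] _]]] := proj2 (clS0 X mX) X0 n.
have [Y [SY _]] := clW 1 1 ltr01 ltr01.
by split=> //; exists X; split; [exact: solid_ae0 SY mX X0 | exact: aeW].
Qed.

End bigcap.

Theorem lemmaA2 (d : measure_display) (T : measurableType d) (R : realType)
  (P : probability T R) (S : nat -> set (T -> R)) :
  (forall n, solidL0 P (S n)) ->
  (bigcap_eq0 P S <-> bigcap_eq0 P (fun n => closureL0 P (S n))).
Proof.
by move=> solidS; split; [exact: bigcap_eq0_closureL0 | exact: closureL0_bigcap_eq0].
Qed.
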